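(* Let $\varrho,\widetilde{\varrho}:\mathbb{R}\to\mathbb{R}$ with $\varrho$ continuous, let $d\in\mathbb{N}^+$, $a<b$, $f:[a,b]^d\to\mathbb{R}$, and $\varepsilon>0$. Suppose (i) there is a function $\phi_\varrho$ generated by a $\varrho$-activated network with width $N$ and depth $L$ such that $|\phi_\varrho(\boldsymbol{x})-f(\boldsymbol{x})|<\varepsilon/2$ for all $\boldsymbol{x}\in[a,b]^d$; and (ii) for every $M>0$ and each $\delta\in(0,1)$ there exists a function $\varrho_\delta$ generated by a $\widetilde{\varrho}$-activated network with width $\widetilde{N}$ and depth $\widetilde{L}$ such that $\varrho_\delta\to\varrho$ uniformly on $[-M,M]$ as $\delta\to0^+$. Then there exists a function $\phi$ generated by a $\widetilde{\varrho}$-activated network with width $N\widetilde{N}$ and depth $L\widetilde{L}$ such that $|\phi(\boldsymbol{x})-f(\boldsymbol{x})|<\varepsilon$ for all $\boldsymbol{x}\in[a,b]^d$.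
   Context: For an activation $\eta:\mathbb{R}\to\mathbb{R}$ (applied to vectors entrywise), a function generated by an $\eta$-activated network with input dimension $n$, width $N$ and depth $L$ is a function of the form $\mathcal{L}_{\ell}\circ\eta\circ\mathcal{L}_{\ell-1}\circ\cdots\circ\eta\circ\mathcal{L}_0$ with $\ell\le L$ hidden layers, where the $\mathcal{L}_i$ are affine maps, $\mathcal{L}_0$ has domain $\mathbb{R}^n$, $\mathcal{L}_\ell$ has codomain $\mathbb{R}$, and every hidden layer has at most $N$ neurons. *)

From HB Require Import structures.
From mathcomp Require Import all_boot all_order all_algebra.
From mathcomp Require Import all_classical all_reals all_analysis.
Unset Printing Implicit Defensive.
Import Order.TTheory GRing.Theory Num.Theory.
Local Open Scope ring_scope.

Section NN.
Variable R : realType.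

(* [feat eta n N l k h]: h : R^n -> R^k is  eta o L_{l-1} o ... o eta o L_0,
   with l hidden layers, each of at most N neurons (k is the last width;
   for l = 0, h is the identity and k = n). *)
Inductive feat (eta : R -> R) (n N : nat) :
    nat -> forall k : nat, ('rV[R]_n -> 'rV[R]_k) -> Prop :=
| feat0 : feat eta n N 0 n (fun x => x)
| featS (l k k' : nat) (h : 'rV[R]_n -> 'rV[R]_k)
        (W : 'M[R]_(k, k')) (b : 'rV[R]_k') :
    feat eta n N l k h -> (k' <= N)%N ->
    feat eta n N l.+1 k' (fun x => map_mx eta (h x *m W + b)).

Definition nn_gen (eta : R -> R) (n N L : nat) (f : 'rV[R]_n -> R) : Prop :=
  exists (l k : nat) (h : 'rV[R]_n -> 'rV[R]_k) (W : 'M[R]_(k, 1)) (b : 'rV[R]_1),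
    (l <= L)%N /\ feat eta n N l k h /\
    forall x, f x = (h x *m W + b) ord0 ord0.

Definition nn_gen1 (eta : R -> R) (N L : nat) (g : R -> R) : Prop :=
  nn_gen eta 1 N L (fun v : 'rV[R]_1 => g (v ord0 ord0)).

Definition cube (d : nat) (a b : R) : set 'rV[R]_d :=
  [set x | forall i : 'I_d, a <= x ord0 i <= b].

End NN.
Arguments nn_gen {R} eta n N L f.
Arguments nn_gen1 {R} eta N L g.
Arguments cube {R} d a b.

(* In every hidden layer x |-> rho (x W + b), each neuron's rho is replaced by
   a copy of an rt-network g close to rho, the copies running in parallel; this
   multiplies the width by Nt and the depth of each layer by Lt.  By induction
   on the layers, the new features approximate the old ones uniformly on the
   cube: the pre-activations range over a bounded set (rho is continuous and
   the cube is bounded), on which rho is uniformly continuous and g is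
   uniformly close to rho, and affine maps are Lipschitz.  The affine readout
   then keeps the error below eps / 2. *)

From HB Require Import structures.
From mathcomp Require Import all_boot all_order all_algebra.
From mathcomp Require Import all_classical all_reals all_analysis.
From mathcomp Require Import lra.
Import Order.TTheory GRing.Theory Num.Theory numFieldNormedType.Exports.
Set Implicit Arguments.
Unset Strict Implicit.
Unset Printing Implicit Defensive.
Local Open Scope ring_scope.

Section NetworkAlgebra.
Variables (R : realType) (eta : R -> R) (n K : nat).

Definition nn_genv (D p : nat) (F : 'rV[R]_n -> 'rV[R]_p) : Prop :=
  exists (l k : nat) (h : 'rV[R]_n -> 'rV[R]_k) (W : 'M[R]_(k, p)) (b : 'rV[R]_p),
    [/\ (l <= D)%N, feat R eta n K l k h & forall x, F x = h x *m W + b].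
Arguments nn_genv : clear implicits.

Lemma nn_genv_le D D' p F : (D <= D')%N -> nn_genv D p F -> nn_genv D' p F.
Proof.
move=> leDD' [l [k [h [W [b [leD featF FE]]]]]].
by exists l, k, h, W, b; split=> //; apply: leq_trans leDD'.
Qed.

Lemma nn_genv_id : nn_genv 0 n id.
Proof.
exists 0%N, n, id, 1%:M, 0; split=> // [|x]; first exact: feat0.
by rewrite mulmx1 addr0.
Qed.

Lemma nn_genv_lin D p q F (A : {linear 'rV[R]_p -> 'rV[R]_q}) c :
  nn_genv D p F -> nn_genv D q (fun x => A (F x) + c).
Proof.
case=> [l [k [h [W [b [leD featF FE]]]]]].
exists l, k, h, (W *m lin1_mx A), (b *m lin1_mx A + c); split=> // x.
by rewrite FE -mul_rV_lin1 mulmxDl mulmxA addrA.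
Qed.

Lemma nn_genv_layer D p q F (A : {linear 'rV[R]_p -> 'rV[R]_q}) c :
  (q <= K)%N -> nn_genv D p F -> nn_genv D.+1 q (fun x => map_mx eta (A (F x) + c)).
Proof.
move=> leqK /(nn_genv_lin A c) [l [k [h [W [b [leD featF FE]]]]]].
exists l.+1, q, (fun x => map_mx eta (h x *m W + b)), 1%:M, 0.
split=> // [|x]; first exact: featS.
by rewrite mulmx1 addr0 FE.
Qed.

(* A layer of G acts on all p rows at once as [mulmxr W], a linear map of the
   flattened matrix. *)
Lemma nn_genv_rowwise D Nt p F j m G :
  (p * Nt <= K)%N -> nn_genv D p F -> feat R eta 1 Nt j m G ->
  nn_genv (D + j) (p * m) (fun x => mxvec (\matrix_i G (const_mx (F x 0 i)))).
Proof.
move=> le_pNt_K nnF; elim=> [|l k k' h W b _ IH lek'].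
  rewrite addn0; have := nn_genv_lin (mxvec \o trmx) 0 nnF.
  congr nn_genv; apply: funext => x /=; rewrite addr0; congr mxvec.
  by apply/matrixP=> i j'; rewrite !mxE (ord1 j').
rewrite addnS.
have le_pk'_K : (p * k' <= K)%N.
  by apply: leq_trans le_pNt_K; rewrite leq_mul2l lek' orbT.
have := nn_genv_layer (mxvec \o mulmxr W \o vec_mx) (mxvec (\matrix_i b)) le_pk'_K IH.
congr nn_genv; apply: funext => x /=.
rewrite mxvecK -linearD map_mxvec; congr mxvec.
by apply/row_matrixP=> i; rewrite -map_row linearD /= row_mul !rowK.
Qed.

Lemma nn_genv_map D Nt Lt p F g : (p * Nt <= K)%N -> nn_genv D p F ->
  nn_gen1 eta Nt Lt g -> nn_genv (D + Lt) p (fun x => map_mx g (F x)).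
Proof.
move=> le_pNt_K nnF [j [m [G [W [b [le_jLt [featG gE]]]]]]].
have := nn_genv_lin (trmx \o mulmxr W \o vec_mx) (const_mx (b 0 0))
  (nn_genv_rowwise le_pNt_K nnF featG).
rewrite -(leq_add2l D) in le_jLt; move/(nn_genv_le le_jLt).
congr nn_genv; apply: funext => x /=; rewrite mxvecK.
apply/rowP=> i; have := gE (const_mx (F x 0 i)); rewrite !mxE => ->.
by congr (_ + _); apply: eq_bigr => k _; rewrite !mxE.
Qed.

Lemma nn_gen_of_nn_genv D F : nn_genv D 1 F -> nn_gen eta n K D (fun x => F x 0 0).
Proof.
case=> [l [k [h [W [b [leD featF FE]]]]]].
by exists l, k, h, W, b; split=> //; split=> // x; rewrite FE.
Qed.

End NetworkAlgebra.
Arguments nn_genv {R} eta n K D p F.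

Lemma continuous_bounded_segment (R : realType) (f : R -> R) (M : R) :
  continuous f -> exists2 B, 0 <= B & forall t, `|t| <= M -> `|f t| <= B.
Proof.
move=> f_cont; have leMM : - `|M| <= `|M| by rewrite (ge0_cp (normr_ge0 M)).
have [c _ max_c] := EVT_max leMM
  (continuous_subspaceT (fun t => continuous_comp (f_cont t) (@norm_continuous _ _ _))).
exists `|f c| => // t leM; apply: max_c.
by rewrite in_itv /= -ler_norml (le_trans leM) ?ler_norm.
Qed.

Section UniformContinuity.
Local Open Scope classical_set_scope.

(* Heine-Cantor, via the near-covering characterisation of compactness. *)
Lemma continuous_unif_segment (R : realType) (f : R -> R) (M e : R) :
  continuous f -> 0 < e ->
  exists2 r, 0 < r & forall z z', `|z| <= M -> `|z - z'| < r -> `|f z - f z'| < e.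
Proof.
move=> f_cont e_gt0; have e2_gt0 : 0 < e / 2 by rewrite divr_gt0.
pose P (r z : R) := forall z', `|z - z'| < r -> `|f z - f z'| < e.
have : \forall r \near 0^'+, `[- M, M] `<=` P r.
  apply: (proj1 (compact_near_coveringP _) (@segment_compact _ _ _)) => x _.
  have /cvgrPdist_lt/(_ _ e2_gt0) [s /= s_gt0 near_x] := f_cont x.
  exists (ball x (s / 2), [set r | 0 < r < s / 2]).
    split; first exact/nbhsx_ballx/divr_gt0.
    exists (s / 2) => [|r /=]; first exact: divr_gt0.
    by rewrite sub0r normrN => + r_gt0; rewrite gtr0_norm // r_gt0.
  case=> x' r /= [xx' /andP[_ rs]] z' x'z'; rewrite /ball /= in xx'.
  have xx's : `|x - x'| < s.
    by rewrite (lt_trans xx') // ltr_pdivrMr // ltr_pMr // ltr1n.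
  have xz' : `|x - z'| < s.
    by rewrite (le_lt_trans (ler_distD x' _ _)) // [s]splitr ltrD // (lt_trans x'z').
  have := ler_distD (f x) (f x') (f z'); rewrite [`|f x' - f x|]distrC.
  by have := near_x _ xx's; have := near_x _ xz'; lra.
case=> r /= r_gt0 cover; exists (r / 2); first exact: divr_gt0.
move=> z z' zM; apply: cover; rewrite /= ?in_itv /= -?ler_norml ?divr_gt0 //.
by rewrite sub0r normrN gtr0_norm ?divr_gt0 // ltr_pdivrMr // ltr_pMr // ltr1n.
Qed.

End UniformContinuity.

Definition mx_abs_sum (R : numDomainType) (k q : nat) (W : 'M[R]_(k, q)) :=
  \sum_i \sum_j `|W i j|.

Lemma mx_abs_sum_ge0 (R : numDomainType) (k q : nat) (W : 'M[R]_(k, q)) :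
  0 <= mx_abs_sum W.
Proof. by apply: sumr_ge0 => i _; apply: sumr_ge0. Qed.

Lemma norm_mulmx_le (R : numDomainType) (k q : nat) (u : 'rV[R]_k) (W : 'M[R]_(k, q))
    (c : R) (j : 'I_q) :
  0 <= c -> (forall i, `|u 0 i| <= c) -> `|(u *m W) 0 j| <= c * mx_abs_sum W.
Proof.
move=> c_ge0 le_uc; rewrite mxE (le_trans (ler_norm_sum _ _ _)) // mulr_sumr.
apply: ler_sum => i _; rewrite normrM ler_pM ?normr_ge0 //.
by rewrite (bigD1 j) //= lerDl sumr_ge0.
Qed.

Section EntryBounds.
Variables (R : realType) (n : nat) (A : set 'rV[R]_n).

Definition entry_bounded p (F : 'rV[R]_n -> 'rV[R]_p) :=
  exists2 B, 0 <= B & forall x, A x -> forall i, `|F x 0 i| <= B.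

Lemma entry_bounded_affine p q F (W : 'M[R]_(p, q)) b :
  entry_bounded F -> entry_bounded (fun x => F x *m W + b).
Proof.
case=> B B_ge0 FB; exists (B * mx_abs_sum W + \sum_j `|b 0 j|).
  by rewrite addr_ge0 ?mulr_ge0 ?mx_abs_sum_ge0 ?sumr_ge0.
move=> x Ax i; rewrite mxE (le_trans (ler_normD _ _)) // lerD ?norm_mulmx_le //.
  exact: FB.
by rewrite (bigD1 i) //= lerDl sumr_ge0.
Qed.

Lemma entry_bounded_map p (F : 'rV[R]_n -> 'rV[R]_p) f :
  continuous f -> entry_bounded F -> entry_bounded (fun x => map_mx f (F x)).
Proof.
move=> f_cont [B _ FB]; have [C C_ge0 fC] := continuous_bounded_segment B f_cont.
by exists C => // x Ax i; rewrite mxE fC ?FB.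
Qed.

Lemma feat_entry_bounded eta N l k h : continuous eta ->
  entry_bounded id -> feat R eta n N l k h -> entry_bounded h.
Proof.
move=> eta_cont A_bd; elim=> // {}l {}k k' {}h W b _ h_bd _.
exact/entry_bounded_map/entry_bounded_affine.
Qed.

End EntryBounds.

Lemma entry_bounded_cube (R : realType) (d : nat) (a b : R) :
  entry_bounded (cube d a b) id.
Proof.
exists (`|a| + `|b|) => [|x cube_x i]; first by rewrite addr_ge0.
have /andP[ax xb] := cube_x i; rewrite ler_norml.
have := ler_norm b; have := ler_norm (- a); rewrite normrN.
have := normr_ge0 a; have := normr_ge0 b; lra.
Qed.

Definition nn_approx (R : realType) (eta : R -> R) (n K D p : nat)
    (A : set 'rV[R]_n) (F : 'rV[R]_n -> 'rV[R]_p) :=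
  forall e, 0 < e -> exists2 G, nn_genv eta n K D p G &
    forall x, A x -> forall i, `|G x 0 i - F x 0 i| < e.
Arguments nn_approx {R} eta n K D p A F.

Section Approximation.
Variables (R : realType) (eta : R -> R) (n K : nat) (A : set 'rV[R]_n).

Lemma nn_approx_id : nn_approx eta n K 0 n A id.
Proof.
move=> e e_gt0; exists id => [|x _ i]; first exact: nn_genv_id.
by rewrite subrr normr0.
Qed.

Lemma nn_approx_affine D p q F (W : 'M[R]_(p, q)) b :
  nn_approx eta n K D p A F -> nn_approx eta n K D q A (fun x => F x *m W + b).
Proof.
move=> approxF e e_gt0; have S_gt0 : 0 < mx_abs_sum W + 1.
  by rewrite ltr_wpDl ?mx_abs_sum_ge0.
have [G nnG GF] := approxF (e / (mx_abs_sum W + 1)) (divr_gt0 e_gt0 S_gt0).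
exists (fun x => G x *m W + b); first exact: (nn_genv_lin (mulmxr W)).
move=> x Ax i; have -> : forall u v : 'rV[R]_q, u 0 i - v 0 i = (u - v) 0 i.
  by move=> u v; rewrite !mxE.
rewrite opprD addrACA subrr addr0 -mulmxBl.
rewrite (le_lt_trans (norm_mulmx_le _ _ (ltW (divr_gt0 e_gt0 S_gt0)) _)) //.
  by move=> j; rewrite !mxE ltW ?GF.
by rewrite mulrAC ltr_pdivrMr // ltr_pM2l // ltrDl.
Qed.

End Approximation.

Section Activation.
Variables (R : realType) (rho rt : R -> R) (Nt Lt : nat).
Hypothesis rho_cont : continuous rho.
Hypothesis rt_approx_rho : forall M e : R, 0 < e ->
  exists2 g, nn_gen1 rt Nt Lt g & forall t, `|t| <= M -> `|g t - rho t| < e.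

Lemma nn_approx_activation n K D p (A : set 'rV[R]_n) F :
  (p * Nt <= K)%N -> entry_bounded A F -> nn_approx rt n K D p A F ->
  nn_approx rt n K (D + Lt) p A (fun x => map_mx rho (F x)).
Proof.
move=> le_pNt_K [M _ FM] approxF e e_gt0.
have e2_gt0 : 0 < e / 2 by rewrite divr_gt0.
have [g nn_g g_rho] := rt_approx_rho (M + 1) e2_gt0.
have [r r_gt0 rho_unif] := continuous_unif_segment M rho_cont e2_gt0.
have min_gt0 : 0 < Num.min r 1 by rewrite lt_min r_gt0 ltr01.
(* G stays within 1 of F, hence in [-(M + 1), M + 1], where g approximates rho. *)
have [G nnG GF] := approxF _ min_gt0.
exists (fun x => map_mx g (G x)) => [|x Ax i].
  exact: nn_genv_map le_pNt_K nnG nn_g.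
rewrite !mxE; set z := F x 0 i; set z' := G x 0 i.
have /andP[zz'_r zz'_1] : (`|z - z'| < r) && (`|z - z'| < 1).
  by rewrite -lt_min distrC GF.
have z'M : `|z'| <= M + 1.
  by have := ler_normD (z' - z) z; rewrite subrK distrC; have := FM x Ax i; lra.
have := ler_distD (rho z') (g z') (rho z); rewrite [`|rho z' - rho z|]distrC.
by have := g_rho _ z'M; have := rho_unif _ _ (FM x Ax i) zz'_r; lra.
Qed.

Lemma feat_nn_approx n N (A : set 'rV[R]_n) l k h :
  entry_bounded A id -> feat R rho n N l k h -> nn_approx rt n (N * Nt) (l * Lt) k A h.
Proof.
move=> A_bd; elim=> [|{}l {}k k' {}h W b feat_h approx_h le_k'N].
  exact: nn_approx_id.
rewrite mulSn addnC; apply: nn_approx_activation.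
- by rewrite leq_mul2r le_k'N orbT.
- exact/entry_bounded_affine/(feat_entry_bounded rho_cont A_bd feat_h).
- exact: nn_approx_affine.
Qed.

End Activation.

Lemma nn_gen1_approx_of_unif_limit (R : realType) (rho rt : R -> R) (Nt Lt : nat) :
  (forall M : R, 0 < M ->
     exists rd : R -> R -> R,
       (forall delta : R, 0 < delta < 1 -> nn_gen1 rt Nt Lt (rd delta)) /\
       (forall e : R, 0 < e -> exists delta0 : R, 0 < delta0 /\
          forall delta : R, 0 < delta < 1 -> delta < delta0 ->
            forall t : R, `|t| <= M -> `|rd delta t - rho t| < e)) ->
  forall M e : R, 0 < e ->
  exists2 g, nn_gen1 rt Nt Lt g & forall t, `|t| <= M -> `|g t - rho t| < e.
Proof.
move=> rd_cvg M e e_gt0; have M1_gt0 : 0 < `|M| + 1 by rewrite ltr_wpDl.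
have [rd [nn_rd /(_ e e_gt0) [delta0 [delta0_gt0 rd_rho]]]] := rd_cvg _ M1_gt0.
have m_gt0 : 0 < Num.min delta0 1 by rewrite lt_min delta0_gt0 ltr01.
have [m_le0 m_le1] : Num.min delta0 1 <= delta0 /\ Num.min delta0 1 <= 1.
  by rewrite ge_min lexx; rewrite ge_min lexx orbT.
have delta01 : 0 < Num.min delta0 1 / 2 < 1 by apply/andP; split; lra.
exists (rd (Num.min delta0 1 / 2)) => [|t tM]; first exact: nn_rd.
apply: rd_rho => //; first lra.
by rewrite (le_trans tM) // (le_trans (ler_norm M)) // lerDl.
Qed.

Theorem lemma9 (R : realType) (rho rt : R -> R) (d : nat) (a b : R)
    (f : 'rV[R]_d -> R) (eps : R) (N L Nt Lt : nat) :
  continuous rho -> (0 < d)%N -> a < b -> 0 < eps ->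
  (exists phi : 'rV[R]_d -> R, nn_gen rho d N L phi /\
     forall x, cube d a b x -> `|phi x - f x| < eps / 2) ->
  (forall M : R, 0 < M ->
     exists rd : R -> R -> R,
       (forall delta : R, 0 < delta < 1 -> nn_gen1 rt Nt Lt (rd delta)) /\
       (forall e : R, 0 < e -> exists delta0 : R, 0 < delta0 /\
          forall delta : R, 0 < delta < 1 -> delta < delta0 ->
            forall t : R, `|t| <= M -> `|rd delta t - rho t| < e)) ->
  exists phi : 'rV[R]_d -> R, nn_gen rt d (N * Nt) (L * Lt) phi /\
    forall x, cube d a b x -> `|phi x - f x| < eps.
Proof.
move=> rho_cont _ _ eps_gt0 [phi [[l [k [h [W [c [le_lL [feat_h phiE]]]]]]] phi_f]].
move=> rd_cvg.
have rt_rho := nn_gen1_approx_of_unif_limit rd_cvg.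
have approx_h := feat_nn_approx rho_cont rt_rho (entry_bounded_cube d a b) feat_h.
have eps2_gt0 : 0 < eps / 2 by rewrite divr_gt0.
have [G nnG G_phi] := nn_approx_affine W c approx_h eps2_gt0.
exists (fun x => G x 0 0); split.
  apply/nn_gen_of_nn_genv/(nn_genv_le _ nnG).
  by rewrite leq_mul2r le_lL orbT.
move=> x x_cube; have := ler_distD (phi x) (G x 0 0) (f x).
by have := phi_f x x_cube; have := G_phi x x_cube 0; rewrite -phiE; lra.
Qed.
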